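(* Let $n$ be a positive integer and let $f$ be the function on $\mathbb{F}_{2^n}$ defined by $f(0)=1$, $f(1)=0$ and $f(x)=x^{-1}$ for $x\notin\{0,1\}$ (i.e. $f=Inv\circ(0,1)$). For $a,b\in\mathbb{F}_{2^n}$ let $\nabla_f(a,b)$ denote the number of $x\in\mathbb{F}_{2^n}$ such that $f(x+a+b)+f(x+a)+f(x+b)+f(x)=0$. Then \[ \nabla_f(a,b)= \begin{cases} 2^n, &\text{if } ab(a+b)=0,\\ 8, &\text{if } a\ne b \text{ and } a^3+a+1=b^3+b+1=0,\\ 4, &\text{if } ab(a+b)\ne 0 \text{ and } [\,a,b\in\mathbb{F}_4^* \text{ or } (a,b)\in S\,],\\ 0, &\text{otherwise,} \end{cases} \] where \[ S=\{(a,b)\in\mathbb{F}_{2^n}^*\times\mathbb{F}_{2^n}^* : a^2+b^2+ab\in\{1,\,ab(a+b)\}\}\setminus\{(a,b)\in\mathbb{F}_{2^3}^*\times\mathbb{F}_{2^3}^* : a^3+a+1=b^3+b+1=0\}. \]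
   Context: $Inv(x)=x^{2^n-2}$ is the multiplicative inverse map on $\mathbb{F}_{2^n}$ (with $Inv(0)=0$), and $(0,1)$ denotes the transposition of $\mathbb{F}_{2^n}$ swapping $0$ and $1$; $Inv\circ(0,1)$ means $x\mapsto Inv((0,1)(x))$. $\mathbb{F}_4^*$ and $\mathbb{F}_{2^3}^*$ denote the nonzero elements of the subfields of order $4$ and $8$ of $\mathbb{F}_{2^n}$ (when these subfields exist; conditions referring to them are void otherwise). $\mathbb{F}_{2^n}^*=\mathbb{F}_{2^n}\setminus\{0\}$. *)

From HB Require Import structures.
From mathcomp Require Import all_boot all_order all_algebra all_field.
Set Implicit Arguments. Unset Strict Implicit. Unset Printing Implicit Defensive.
Import GRing.Theory.
Local Open Scope ring_scope.

(* F is a finite field; in the theorem we assume #|F| = 2^n, so F is (a copy of) F_{2^n}. *)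

Definition inv01 (F : finFieldType) (x : F) : F :=
  if x == 0 then 1 else if x == 1 then 0 else x^-1.

Definition nabla (F : finFieldType) (f : F -> F) (a b : F) : nat :=
  #|[set x : F | f (x + a + b) + f (x + a) + f (x + b) + f x == 0]|.

(* x lies in the nonzero part of the subfield of order 2^k of F_{2^n};
   this subfield exists iff k %| n, and then it is {x | x^(2^k) = x}. *)
Definition in_subfield_star (F : finFieldType) (n k : nat) (x : F) : bool :=
  [&& (k %| n)%N, x ^+ (2 ^ k) == x & x != 0].

Definition cubic_root (F : finFieldType) (x : F) : bool :=
  x ^+ 3 + x + 1 == 0.

Definition S_set (F : finFieldType) (n : nat) (a b : F) : bool :=
  [&& a != 0, b != 0,
      (a ^+ 2 + b ^+ 2 + a * b == 1) || (a ^+ 2 + b ^+ 2 + a * b == a * b * (a + b))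
    & ~~ [&& in_subfield_star n 3 a, in_subfield_star n 3 b, cubic_root a & cubic_root b]].

Definition nabla_value (F : finFieldType) (n : nat) (a b : F) : nat :=
  if a * b * (a + b) == 0 then (2 ^ n)%N
  else if (a != b) && cubic_root a && cubic_root b then 8%N
  else if (in_subfield_star n 2 a && in_subfield_star n 2 b) || S_set n a b then 4%N
  else 0%N.

(* Let V = {0, a, b, a + b} and L x = \prod_(v in V) (x + v), which in
   characteristic 2 equals x^4 + Q x^2 + P x with Q = a^2 + b^2 + ab and
   P = ab(a + b); so L is additive and vanishes exactly on V. Since
   f y = y^-1 + [y = 0] + [y = 1], the summand of nabla is the sum over V of
   f (x + v): it equals Q/P + [1 \notin V] on V, and P / L x + [x + 1 \in V]
   off V, where L x = L 1 = 1 + Q + P when x + 1 \in V. Its zero set is thus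
   the union of V (when Q = [1 \notin V] P) and of 1 + V (when 1 \notin V and
   Q = 1). Both happen iff P = Q = 1, i.e. iff X^3 + X + 1 has the roots of
   X^3 + Q X + P, namely a, b and a + b. Finally, 1 \in V and Q = 0 hold
   together iff a^3 = b^3 = 1, i.e. iff a, b \in F_4^*. *)

From mathcomp Require Import all_boot all_order all_algebra all_field.
From mathcomp Require Import ring.
Set Implicit Arguments. Unset Strict Implicit. Unset Printing Implicit Defensive.
Import GRing.Theory.
Local Open Scope ring_scope.

(* [ring: (pcharf0 F2)] rewrites [2 = 0] only in monomials with coefficient
   exactly 2, so it fails on many identities [lhs = rhs] of characteristic 2
   that it proves in the form [lhs - rhs = 0]. *)
Ltac ring_pchar2 F2 := apply/eqP; rewrite -subr_eq0; apply/eqP; ring: (pcharf0 F2).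

Section Pchar2.

Variables (R : comNzRingType) (R2 : 2 \in [pchar R]).
Implicit Types x y z : R.

Lemma addr_eq0_pchar2 x y : (x + y == 0) = (x == y).
Proof. by rewrite addr_eq0 oppr_pchar2. Qed.

Lemma addr_eq_pchar2 x y z : (x + y == z) = (y == x + z).
Proof. by rewrite -(addr_eq0_pchar2 (x + y)) -(addr_eq0_pchar2 y) addrAC addrC. Qed.

Lemma sqrrD_pchar2 x y : (x + y) ^+ 2 = x ^+ 2 + y ^+ 2.
Proof. by ring_pchar2 R2. Qed.

End Pchar2.

Section Span2.

Variables (F : fieldType) (F2 : 2 \in [pchar F]).

Definition span2 (a b : F) : seq F := [:: 0; a; b; a + b].

Definition span2_poly (a b x : F) : F := \prod_(v <- span2 a b) (x + v).

Definition coefQ (a b : F) : F := a ^+ 2 + b ^+ 2 + a * b.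

Definition coefP (a b : F) : F := a * b * (a + b).

Variables a b : F.

Local Notation V := (span2 a b).
Local Notation L := (span2_poly a b).
Local Notation Q := (coefQ a b).
Local Notation P := (coefP a b).

Lemma span2_polyE x : L x = x ^+ 4 + Q * x ^+ 2 + P * x.
Proof. by rewrite /span2_poly /coefQ /coefP !big_cons big_nil; ring_pchar2 F2. Qed.

Lemma span2_polyD x y : L (x + y) = L x + L y.
Proof.
by rewrite !span2_polyE -[4%N]/(2 * 2)%N !exprM !(sqrrD_pchar2 F2); ring.
Qed.

Lemma span2_poly_eq0 x : (L x == 0) = (x \in V).
Proof.
rewrite /span2_poly prodf_seq_eq0 -has_pred1.
by apply: eq_has => v; rewrite (addr_eq0_pchar2 F2) eq_sym.
Qed.

Lemma span2_addr x y : x \in V -> y \in V -> x + y \in V.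
Proof. by rewrite -!span2_poly_eq0 span2_polyD => /eqP-> /eqP->; rewrite addr0. Qed.

Lemma span2_poly1 : L 1 = 1 + Q + P.
Proof. by rewrite span2_polyE !expr1n !mulr1. Qed.

Lemma span2_cubic v : v \in V -> v != 0 -> v ^+ 3 + Q * v + P = 0.
Proof.
rewrite -span2_poly_eq0 span2_polyE => /eqP L0 v0; apply: (mulfI v0).
by rewrite mulr0 -[RHS]L0; ring.
Qed.

Hypotheses (a0 : a != 0) (b0 : b != 0) (ab0 : a + b != 0).

Lemma uniq_span2 : uniq V.
Proof.
have ab : a != b by rewrite -(addr_eq0_pchar2 F2).
have a_ab : a != a + b by rewrite eq_sym -(addr_eq0_pchar2 F2) addrAC addrr_pchar2 // add0r.
have b_ab : b != a + b by rewrite eq_sym -(addr_eq0_pchar2 F2) -addrA addrr_pchar2 // addr0.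
by rewrite /= !inE !negb_or ![0 == _]eq_sym a0 b0 ab0 ab a_ab b_ab.
Qed.

Lemma coefP_neq0 : P != 0.
Proof. by rewrite !mulf_neq0. Qed.

Lemma perm_span2_shift v : v \in V -> perm_eq V [seq v + w | w <- V].
Proof.
move=> Vv; apply: uniq_perm; rewrite ?map_inj_uniq ?uniq_span2 //; first exact: addrI.
move=> w; rewrite -{2}(addKr_pchar2 F2 v w) mem_map; last exact: addrI.
by apply/idP/idP => [|/(span2_addr Vv)]; [exact: span2_addr | rewrite addKr_pchar2].
Qed.

Lemma sum_span2_inv : \sum_(v <- V) v^-1 = Q / P.
Proof.
rewrite !big_cons big_nil invr0 add0r addr0.
have -> : a^-1 + (b^-1 + (a + b)^-1) = (b * (a + b) + a * (a + b) + a * b) / P.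
  by rewrite /coefP; field; rewrite a0 b0 ab0.
by congr (_ / _); rewrite /coefQ; ring_pchar2 F2.
Qed.

Lemma sum_span2_inv_shift x : x \in V -> \sum_(v <- V) (x + v)^-1 = Q / P.
Proof.
by move=> Vx; rewrite -sum_span2_inv [RHS](perm_big _ (perm_span2_shift Vx)) big_map.
Qed.

Lemma sum_span2_inv_notin x : x \notin V -> \sum_(v <- V) (x + v)^-1 = P / L x.
Proof.
rewrite -span2_poly_eq0 /span2_poly !big_cons !big_nil !addr0 !mulr1.
rewrite !mulf_eq0 !negb_or => /and4P[x0 xa xb xab].
have inv_add (u w : F) : u != 0 -> w != 0 -> u^-1 + w^-1 = (u + w) / (u * w).
  by move=> u0 w0; field; rewrite u0 w0.
have [xxa xbxab] : x + (x + a) = a /\ x + b + (x + (a + b)) = a.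
  by split; ring_pchar2 F2.
have pair_prod : x * (x + a) + (x + b) * (x + (a + b)) = b * (a + b).
  by ring_pchar2 F2.
rewrite addrA !inv_add ?mulf_neq0 // xxa xbxab -mulrDr inv_add ?mulf_neq0 //.
by rewrite pair_prod /coefP !mulrA.
Qed.

End Span2.

Definition zero_on_span (F : fieldType) (a b : F) : bool :=
  if 1 \in span2 a b then coefQ a b == 0 else coefQ a b == coefP a b.

Definition zero_on_coset (F : fieldType) (a b : F) : bool :=
  (1 \notin span2 a b) && (coefQ a b == 1).

Lemma sum_indicator_uniq (R : pzSemiRingType) (T : eqType) (s : seq T) (c : T) :
  uniq s -> \sum_(w <- s) (w == c)%:R = (c \in s)%:R :> R.
Proof.
move=> us; rewrite -natr_sum -count_uniq_mem //; congr _%:R.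
by elim: s {us} => [|w s IH]; rewrite ?big_nil // big_cons IH.
Qed.

Lemma in_subfield_star2E (F : finFieldType) n (x : F) :
  in_subfield_star n 2 x = (2 %| n)%N && (x ^+ 3 == 1).
Proof.
rewrite /in_subfield_star; congr (_ && _); apply/andP/eqP => [[/eqP x4 x0] | x3].
  by apply: (mulIf x0); rewrite mul1r -exprSr.
split; last by apply: contra_eq_neq x3 => ->; rewrite expr0n eq_sym oner_eq0.
by rewrite (exprSr x 3) x3 mul1r.
Qed.

Lemma expn2_mod3 n : (2 ^ n %% 3 = if odd n then 2 else 1)%N.
Proof. by elim: n => [//|n IH]; rewrite expnS -modnMmr IH /=; case: (odd n). Qed.

Lemma cube_root1_dvd2 (F : finFieldType) n (x : F) :
  #|F| = (2 ^ n)%N -> x ^+ 3 = 1 -> x != 1 -> (2 %| n)%N.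
Proof.
move=> cardF x3 x1; rewrite dvdn2; apply: contra x1 => odd_n.
have x0 : x != 0 by apply: contra_eq_neq x3 => ->; rewrite expr0n eq_sym oner_eq0.
have := expf_card x; rewrite cardF -(expr_mod _ x3) expn2_mod3 odd_n => x2.
by apply/eqP/(mulIf x0); rewrite mul1r -expr2.
Qed.

Section Nabla.

Variables (F : finFieldType) (F2 : 2 \in [pchar F]).

Lemma inv01E (y : F) : inv01 y = y^-1 + (y == 0)%:R + (y == 1)%:R.
Proof.
rewrite /inv01; have [->|y0] := eqVneq y 0; first by rewrite invr0 eq_sym oner_eq0 add0r addr0.
have [->|y1] := eqVneq y 1; first by rewrite invr1 addr0 addrr_pchar2.
by rewrite !addr0.
Qed.

Variables a b : F.
Hypotheses (a0 : a != 0) (b0 : b != 0) (ab0 : a + b != 0).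

Local Notation V := (span2 a b).
Local Notation L := (span2_poly a b).
Local Notation Q := (coefQ a b).
Local Notation P := (coefP a b).

Lemma sum_inv01_span2 x :
  \sum_(v <- V) inv01 (x + v) = \sum_(v <- V) (x + v)^-1 + ((x \in V) + (x + 1 \in V))%:R.
Proof.
rewrite (eq_bigr _ (fun v _ => inv01E (x + v))) !big_split /= natrD -addrA.
congr (_ + (_ + _)); rewrite -sum_indicator_uniq ?uniq_span2 //;
  by apply: eq_bigr => v _; rewrite (addr_eq_pchar2 F2) ?addr0.
Qed.

Lemma sum_inv01_span2_eq0 x :
  (\sum_(v <- V) inv01 (x + v) == 0) =
  (x \in V) && zero_on_span a b || (x + 1 \in V) && zero_on_coset a b.
Proof.
rewrite sum_inv01_span2 (addr_eq0_pchar2 F2) /zero_on_span /zero_on_coset.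
have [Vx | Vx] := boolP (x \in V).
  have -> : (x + 1 \in V) = (1 \in V).
    by apply/idP/idP => [/(span2_addr F2 Vx) | /(span2_addr F2 Vx) //]; rewrite addKr_pchar2.
  rewrite sum_span2_inv_shift //; case: ifP => V1 /=; rewrite ?andbF ?orbF.
    by rewrite (pcharf0 F2) mulf_eq0 invr_eq0 (negbTE (coefP_neq0 a0 b0 ab0)) orbF.
  by rewrite -[X in _ == X]divr1 eqr_div ?oner_neq0 ?coefP_neq0 // mulr1 mul1r.
have Lx0 : L x != 0 by rewrite span2_poly_eq0.
rewrite sum_span2_inv_notin //=; have [V1x | V1x] := boolP (x + 1 \in V); last first.
  by rewrite mulf_eq0 invr_eq0 (negbTE Lx0) (negbTE (coefP_neq0 a0 b0 ab0)).
have V1 : 1 \notin V.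
  by apply: contra Vx => /(span2_addr F2 V1x); rewrite addrK_pchar2.
have Lx1 : L (x + 1) == 0 by rewrite span2_poly_eq0.
have -> : L x = L 1 by rewrite -{1}(addrK_pchar2 F2 1 x) span2_polyD // (eqP Lx1) add0r.
rewrite /= V1 (span2_poly1 F2) -[X in _ == X]divr1 eqr_div ?oner_neq0 //; last first.
  by rewrite -(span2_poly1 F2) span2_poly_eq0.
by rewrite mulr1 mul1r eq_sym -subr_eq0 addrK (addr_eq0_pchar2 F2) eq_sym.
Qed.

Lemma nabla_span2 :
  nabla (@inv01 F) a b = (4 * (zero_on_span a b + zero_on_coset a b))%N.
Proof.
have summandE x : inv01 (x + a + b) + inv01 (x + a) + inv01 (x + b) + inv01 x =
    \sum_(v <- V) inv01 (x + v).
  by rewrite !big_cons big_nil !addr0 (addrA x a b); ring.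
set S0 := [set x : F | x \in V]; set S1 := [set x : F | x + 1 \in V].
have card_S0 : #|S0| = 4%N by rewrite cardsE (card_uniqP (uniq_span2 F2 a0 b0 ab0)).
have card_S1 : #|S1| = 4%N.
  by rewrite -card_S0 -(card_preimset S0 (addIr 1)); apply: eq_card => x; rewrite !inE.
rewrite /nabla; under eq_finset => x do rewrite summandE sum_inv01_span2_eq0.
case A: (zero_on_span a b); case B: (zero_on_coset a b) => /=.
- have S01 : S0 :&: S1 = set0.
    apply/setP => x; rewrite in_set0; apply/setIP => -[]; rewrite !in_set => V0 /(span2_addr F2 V0).
    by rewrite (addKr_pchar2 F2); move: B => /andP[/negPf->].
  rewrite (_ : [set x | _] = S0 :|: S1); last by apply/setP => x; rewrite !inE !andbT.
  by rewrite cardsU S01 cards0 card_S0 card_S1.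
- by rewrite (@eq_card _ _ S0) ?card_S0 // => x; rewrite !inE andbT andbF orbF.
- by rewrite (@eq_card _ _ S1) ?card_S1 // => x; rewrite !inE andbT andbF.
- by apply/eqP; rewrite cards_eq0; apply/eqP/setP => x; rewrite !inE !andbF.
Qed.

Lemma span2_cubic_ab : a ^+ 3 + Q * a + P = 0 /\ b ^+ 3 + Q * b + P = 0.
Proof. by split; apply: span2_cubic; rewrite ?inE ?eqxx ?orbT. Qed.

Lemma zero_on_span_and_coset :
  zero_on_span a b && zero_on_coset a b = cubic_root a && cubic_root b.
Proof.
have [cub_a cub_b] := span2_cubic_ab.
rewrite /zero_on_span /zero_on_coset /cubic_root.
apply/idP/andP => [| [/eqP ca /eqP cb]].
  case: ifP => [_ /and3P[] // | _ /and3P[/eqP QP _ /eqP Q1]].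
  have cubE v : v ^+ 3 + Q * v + P = v ^+ 3 + v + 1 by rewrite -QP Q1 mul1r.
  by rewrite -cubE cub_a -cubE cub_b eqxx.
have Q1 : Q = 1.
  have ab : a - b != 0 by rewrite (oppr_pchar2 F2).
  apply/eqP; rewrite -subr_eq0 -(mulIr_eq0 _ (mulIf ab)).
  have -> : (Q - 1) * (a - b) = a ^+ 3 + Q * a + P - (a ^+ 3 + a + 1) -
                                (b ^+ 3 + Q * b + P - (b ^+ 3 + b + 1)) by ring.
  by rewrite cub_a ca cub_b cb subrr.
have P1 : P = 1.
  apply/eqP; rewrite -subr_eq0.
  have -> : P - 1 = a ^+ 3 + Q * a + P - (a ^+ 3 + a + 1) by rewrite Q1; ring.
  by rewrite cub_a ca subrr.
have V1 : 1 \notin V.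
  by rewrite -(span2_poly_eq0 F2) (span2_poly1 F2) Q1 P1 (addrr_pchar2 F2) add0r oner_eq0.
by rewrite (negbTE V1) Q1 P1 eqxx.
Qed.

Lemma subfield4_star_pair n : #|F| = (2 ^ n)%N ->
  in_subfield_star n 2 a && in_subfield_star n 2 b = (1 \in V) && (Q == 0).
Proof.
move=> cardF; have [cub_a cub_b] := span2_cubic_ab.
have a3 : a ^+ 3 = Q * a + P by apply/eqP; rewrite -(addr_eq0_pchar2 F2) addrA cub_a.
have b3 : b ^+ 3 = Q * b + P by apply/eqP; rewrite -(addr_eq0_pchar2 F2) addrA cub_b.
have cubes1 : (a ^+ 3 == 1) && (b ^+ 3 == 1) = (1 \in V) && (Q == 0).
  rewrite -(span2_poly_eq0 F2) (span2_poly1 F2).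
  apply/andP/andP => [[/eqP a1 /eqP b1] | [+ /eqP Q0]].
    have Q0 : Q = 0.
      apply/eqP; rewrite -(mulrI_eq0 _ (mulfI ab0)).
      have -> : (a + b) * Q = a ^+ 3 + b ^+ 3 by rewrite /coefQ; ring_pchar2 F2.
      by rewrite a1 b1 (addrr_pchar2 F2).
    by rewrite Q0 addr0 -a1 a3 Q0 mul0r add0r (addrr_pchar2 F2).
  rewrite Q0 addr0 (addr_eq0_pchar2 F2) => /eqP P1.
  by rewrite a3 b3 Q0 -P1 !mul0r !add0r.
rewrite !in_subfield_star2E andbACA andbb -cubes1.
apply/andP/idP => [[] // | /[dup] /andP[/eqP a1 /eqP b1] ->]; split => //.
have [a_1 | a_n1] := eqVneq a 1; last exact: cube_root1_dvd2 cardF a1 a_n1.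
by apply: cube_root1_dvd2 cardF b1 _; rewrite -a_1 eq_sym -(addr_eq0_pchar2 F2).
Qed.

Lemma zero_on_span_or_coset n : #|F| = (2 ^ n)%N ->
  zero_on_span a b || zero_on_coset a b =
  [|| in_subfield_star n 2 a && in_subfield_star n 2 b, Q == 1 | Q == P].
Proof.
move=> cardF; rewrite subfield4_star_pair // /zero_on_span /zero_on_coset.
case: ifP => V1 /=; last by rewrite orbC.
have : 1 + Q + P == 0 by rewrite -(span2_poly1 F2) (span2_poly_eq0 F2).
rewrite (addrC 1) -addrA (addr_eq0_pchar2 F2) => /eqP QP1.
have -> : (Q == 1) = false.
  by rewrite QP1 (addr_eq_pchar2 F2) (addrr_pchar2 F2) (negbTE (coefP_neq0 a0 b0 ab0)).
have -> : (Q == P) = false by rewrite QP1 addrC (addr_eq_pchar2 F2) (addrr_pchar2 F2) oner_eq0.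
by rewrite !orbF.
Qed.

Lemma S_setE n : ~~ (cubic_root a && cubic_root b) -> S_set n a b = (Q == 1) || (Q == P).
Proof.
rewrite /S_set a0 b0 /=.
by case: (cubic_root a); case: (cubic_root b) => //= _; rewrite !andbF andbT.
Qed.

End Nabla.

Lemma nabla_degenerate (F : finFieldType) (F2 : 2 \in [pchar F]) (f : F -> F) (a b : F) :
  a * b * (a + b) = 0 -> nabla f a b = #|F|.
Proof.
move=> /eqP; rewrite !mulf_eq0 (addr_eq0_pchar2 F2) /nabla -cardsT => abab.
apply: eq_card => x; rewrite !inE; apply/eqP.
by move: abab => /orP[/orP[] | ] /eqP->; rewrite ?addr0 ?(addrK_pchar2 F2); ring: (pcharf0 F2).
Qed.

Theorem theorem3p1 (F : finFieldType) (n : nat) :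
  (0 < n)%N -> #|F| = (2 ^ n)%N ->
  forall a b : F, nabla (@inv01 F) a b = nabla_value n a b.
Proof.
move=> _ cardF a b.
have F2 : 2 \in [pchar F] := card_finPcharP cardF (isT : prime 2).
rewrite /nabla_value; have [P0 | ] := eqVneq (a * b * (a + b)) 0.
  by rewrite (nabla_degenerate F2) // cardF.
rewrite !mulf_eq0 !negb_or => /andP[/andP[a0 b0] ab0].
have -> : a != b by rewrite -(addr_eq0_pchar2 F2).
rewrite (nabla_span2 F2 a0 b0 ab0) /=.
have [cubic_ab | no_cubic] := boolP (cubic_root a && cubic_root b).
  by move: cubic_ab; rewrite -(zero_on_span_and_coset F2 a0 b0 ab0) => /andP[-> ->].
rewrite S_setE // -(zero_on_span_or_coset F2 a0 b0 ab0 cardF).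
move: no_cubic; rewrite -(zero_on_span_and_coset F2 a0 b0 ab0).
by case: (zero_on_span a b); case: (zero_on_coset a b).
Qed.
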